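(* Let $\alpha=\exp\left(\frac{2\pi i}{5}\right)$, let $c,x\in\mathbb{C}$, and let $(a_1,A_1),\dots,(a_p,A_p)$ and $(b_1,B_1),\dots,(b_q,B_q)$ be parameter pairs ($a_j,b_j\in\mathbb{C}$, $A_j,B_j$ nonzero reals) such that all Gamma functions involved are well defined and all series involved converge. Then $$\sum_{k=0}^{4}\alpha^{k}\,{}_p\Psi_q\left[\begin{array}{c}(a_1,A_1),\dots,(a_p,A_p);\\(b_1,B_1),\dots,(b_q,B_q);\end{array} c(x\alpha^k)^2\right] =\frac{5c^2x^4\,\Gamma\!\left(\frac35\right)\Gamma\!\left(\frac45\right)\Gamma\!\left(\frac65\right)\Gamma\!\left(\frac75\right)}{2}\;{}_p\Psi_{q+4}\left[\begin{array}{c}(a_1+2A_1,5A_1),\dots,(a_p+2A_p,5A_p);\\ \left(\tfrac35,1\right),\left(\tfrac45,1\right),\left(\tfrac65,1\right),\left(\tfrac75,1\right),(b_1+2B_1,5B_1),\dots,(b_q+2B_q,5B_q);\end{array}\left(\frac{cx^2}{5}\right)^5\right].$$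
   Context: The Fox–Wright function is defined by the series $${}_p\Psi_q\left[\begin{array}{c}(\alpha_1,A_1),\dots,(\alpha_p,A_p);\\(\beta_1,B_1),\dots,(\beta_q,B_q);\end{array}z\right]=\sum_{n=0}^{\infty}\frac{\Gamma(\alpha_1+A_1n)\cdots\Gamma(\alpha_p+A_pn)}{\Gamma(\beta_1+B_1n)\cdots\Gamma(\beta_q+B_qn)}\frac{z^n}{n!},$$ where $\alpha_i,\beta_j\in\mathbb{C}$ and $A_i,B_j$ are nonzero real numbers chosen so that the Gamma products are well defined. Values of parameters and variables for which the expressions do not make sense are excluded. *)

From Stdlib Require Import Reals List Factorial.
From Coquelicot Require Import Coquelicot.
Import ListNotations.
Open Scope R_scope.

Definition Cexp (z : C) : C :=
  (exp (Re z) * cos (Im z), exp (Re z) * sin (Im z)).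

Definition Clim (u : nat -> C) : C :=
  (real (Lim_seq (fun n => Re (u n))), real (Lim_seq (fun n => Im (u n)))).

(* Euler's (Gauss') limit formula for the complex Gamma function:
   Gamma z = lim_{n->oo} n! n^z / (z (z+1) ... (z+n)),  z not in {0,-1,-2,...}. *)
Definition Gamma_seq (z : C) (n : nat) : C :=
  Cdiv (Cmult (RtoC (INR (fact n))) (Cexp (Cmult z (RtoC (ln (INR n))))))
       (fold_right Cmult (RtoC 1) (map (fun k => Cplus z (RtoC (INR k))) (seq 0 (S n)))).

Definition Gamma (z : C) : C := Clim (Gamma_seq z).

Definition Gamma_pole (z : C) : Prop := exists k : nat, z = RtoC (- INR k).

Definition param := (C * R)%type.

Definition prodC (l : list C) : C := fold_right Cmult (RtoC 1) l.

Definition FW_term (ps qs : list param) (z : C) (n : nat) : C :=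
  Cmult (Cdiv (prodC (map (fun p => Gamma (Cplus (fst p) (RtoC (snd p * INR n)))) ps))
              (prodC (map (fun q => Gamma (Cplus (fst q) (RtoC (snd q * INR n)))) qs)))
        (Cdiv (Cpow z n) (RtoC (INR (fact n)))).

Definition FoxWright (ps qs : list param) (z : C) : C :=
  (Series (fun n => Re (FW_term ps qs z n)), Series (fun n => Im (FW_term ps qs z n))).

Definition FW_params_ok (ps qs : list param) : Prop :=
  (forall p, In p ps -> snd p <> 0 /\ forall n : nat, ~ Gamma_pole (Cplus (fst p) (RtoC (snd p * INR n)))) /\
  (forall q, In q qs -> snd q <> 0 /\ forall n : nat, ~ Gamma_pole (Cplus (fst q) (RtoC (snd q * INR n)))).

Definition FW_converges (ps qs : list param) (z : C) : Prop :=
  ex_series (V := C_NormedModule) (FW_term ps qs z).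

Definition alpha5 : C := Cexp (0, 2 * PI / 5).

Definition shift25 (p : param) : param := (Cplus (fst p) (RtoC (2 * snd p)), 5 * snd p).

From Stdlib Require Import Reals List Lra Lia Factorial.
From Coquelicot Require Import Coquelicot.
Import ListNotations.
Open Scope R_scope.

(* Write the k-th argument as (c x^2) (alpha^k)^2. Then the n-th terms of the five series add
   up to T_n(c x^2) * sum_k (alpha^(2n+1))^k, and this root-of-unity sum is 5 when 5 | 2n+1,
   i.e. n = 5m+2, and 0 otherwise; so the left side is 5 * sum_m T_(5m+2)(c x^2). In that term
   Gamma(a + A(5m+2)) = Gamma((a+2A) + 5A m), (c x^2)^(5m+2) = c^2 x^4 5^(5m) ((c x^2/5)^5)^m and
   (5m+2)! = 2 5^(5m) m! (3/5)_m (4/5)_m (6/5)_m (7/5)_m with (r)_m = Gamma(r+m)/Gamma(r).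
   The last identity needs Gamma(z+1) = z Gamma(z) and Gamma(z) <> 0 for z > 0, obtained from
   Euler's limit n! n^z / (z(z+1)...(z+n)), which increases from n = 1 on and stays bounded. *)

Fixpoint pochhammer (r : R) (m : nat) : R :=
  match m with O => 1 | S k => pochhammer r k * (r + INR k) end.

Lemma pochhammer_pos r m : 0 < r -> 0 < pochhammer r m.
Proof.
  intros Hr. induction m as [|m IH]; simpl; [lra|].
  apply Rmult_lt_0_compat; [exact IH|]. pose proof (pos_INR m); lra.
Qed.

Lemma pochhammer_succ_arg r m : pochhammer (r + 1) m * r = pochhammer r m * (r + INR m).
Proof.
  induction m as [|m IH]; simpl pochhammer; [simpl; ring|].
  replace (pochhammer (r + 1) m * (r + 1 + INR m) * r)
    with (pochhammer (r + 1) m * r * (r + 1 + INR m)) by ring.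
  rewrite IH, S_INR. ring.
Qed.

Lemma prodC_app (l1 l2 : list C) : prodC (l1 ++ l2) = (prodC l1 * prodC l2)%C.
Proof.
  unfold prodC. induction l1 as [|a l IH]; simpl; [ring|].
  rewrite IH. ring.
Qed.

Lemma prodC_shifts (r : R) (m : nat) :
  prodC (map (fun k => RtoC r + RtoC (INR k))%C (seq 0 m)) = RtoC (pochhammer r m).
Proof.
  induction m as [|m IH]; [reflexivity|].
  rewrite seq_S, map_app, prodC_app, IH. unfold prodC. simpl.
  rewrite Cmult_1_r, <- RtoC_plus, <- RtoC_mult. reflexivity.
Qed.

Lemma Cexp_RtoC (t : R) : Cexp (RtoC t) = RtoC (exp t).
Proof. unfold Cexp, RtoC. simpl. rewrite cos_0, sin_0. f_equal; ring. Qed.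

Lemma exp_le_mono x y : x <= y -> exp x <= exp y.
Proof. intros [H|H]; [left; apply exp_increasing, H | right; rewrite H; reflexivity]. Qed.

Definition euler_seq (z : R) (n : nat) : R :=
  INR (fact n) * exp (z * ln (INR n)) / pochhammer z (S n).

Definition Gamma_R (z : R) : R := real (Lim_seq (euler_seq z)).

Lemma Gamma_seq_RtoC z n : 0 < z -> Gamma_seq (RtoC z) n = RtoC (euler_seq z n).
Proof.
  intros Hz. unfold Gamma_seq, euler_seq.
  change (fold_right Cmult (RtoC 1) ?l) with (prodC l).
  rewrite prodC_shifts, <- RtoC_mult, Cexp_RtoC, <- RtoC_mult, RtoC_div; [reflexivity|].
  apply Rgt_not_eq, pochhammer_pos, Hz.
Qed.

Lemma Gamma_RtoC z : 0 < z -> Gamma (RtoC z) = RtoC (Gamma_R z).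
Proof.
  intros Hz. unfold Gamma, Clim, Gamma_R.
  rewrite (Lim_seq_ext (fun n => Re (Gamma_seq (RtoC z) n)) (euler_seq z))
    by (intros n; rewrite Gamma_seq_RtoC; auto).
  rewrite (Lim_seq_ext (fun n => Im (Gamma_seq (RtoC z) n)) (fun _ => 0))
    by (intros n; rewrite Gamma_seq_RtoC; auto).
  rewrite Lim_seq_const. reflexivity.
Qed.

Lemma ln_succ_sub_bounds n : (1 <= n)%nat ->
  / INR (S n) <= ln (INR (S n)) - ln (INR n) <= / INR n.
Proof.
  intros Hn. assert (H1 : 1 <= INR n) by (apply (le_INR 1); auto).
  rewrite S_INR.
  assert (ln_le_pred : forall y, 0 < y -> ln y <= y - 1).
  { intros y Hy. pose proof (exp_ineq1_le (ln y)). rewrite exp_ln in *; lra. }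
  split.
  - assert (Hq : 0 < INR n / (INR n + 1)) by (apply Rdiv_lt_0_compat; lra).
    pose proof (ln_le_pred _ Hq) as H. unfold Rdiv in H.
    rewrite ln_mult, ln_Rinv in H by (try apply Rinv_0_lt_compat; lra).
    replace (INR n * / (INR n + 1) - 1) with (- / (INR n + 1)) in H by (field; lra). lra.
  - assert (Hq : 0 < (INR n + 1) / INR n) by (apply Rdiv_lt_0_compat; lra).
    pose proof (ln_le_pred _ Hq) as H. unfold Rdiv in H.
    rewrite ln_mult, ln_Rinv in H by (try apply Rinv_0_lt_compat; lra).
    replace ((INR n + 1) * / INR n - 1) with (/ INR n) in H by (field; lra). lra.
Qed.

Section EulerLimit.

Variable z : R.
Hypothesis z_pos : 0 < z.

Lemma euler_seq_pos n : 0 < euler_seq z n.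
Proof.
  unfold euler_seq. apply Rdiv_lt_0_compat; [|apply pochhammer_pos, z_pos].
  apply Rmult_lt_0_compat; [apply lt_0_INR, lt_O_fact | apply exp_pos].
Qed.

Lemma euler_seq_S n : (1 <= n)%nat ->
  euler_seq z (S n) =
  euler_seq z n * (INR (S n) * exp (z * (ln (INR (S n)) - ln (INR n))) / (z + INR (S n))).
Proof.
  intros Hn. unfold euler_seq. cbn [pochhammer].
  change (fact (S n)) with (S n * fact n)%nat. rewrite mult_INR.
  replace (z * (ln (INR (S n)) - ln (INR n))) with (z * ln (INR (S n)) + - (z * ln (INR n)))
    by ring.
  rewrite exp_plus, exp_Ropp.
  pose proof (pochhammer_pos z n z_pos). pose proof (exp_pos (z * ln (INR n))).
  pose proof (pos_INR n). pose proof (pos_INR (S n)).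
  field. repeat split; lra.
Qed.

Lemma euler_seq_le_S n : (1 <= n)%nat -> euler_seq z n <= euler_seq z (S n).
Proof.
  intros Hn. rewrite euler_seq_S by exact Hn.
  destruct (ln_succ_sub_bounds n Hn) as [Hlow _].
  set (d := ln (INR (S n)) - ln (INR n)) in *. set (N := INR (S n)) in *.
  assert (HN : 0 < N) by (apply lt_0_INR; lia).
  assert (HNd : 1 <= N * d).
  { apply Rmult_le_compat_l with (r := N) in Hlow; [|lra]. rewrite Rinv_r in Hlow; lra. }
  assert (Hexp : N * (1 + z * d) <= N * exp (z * d))
    by (apply Rmult_le_compat_l; [lra | apply exp_ineq1_le]).
  assert (Hratio : 1 <= N * exp (z * d) / (z + N)).
  { apply Rmult_le_reg_r with (z + N); [lra|].
    unfold Rdiv. rewrite Rmult_assoc, Rinv_l, Rmult_1_r by lra. nra. }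
  pose proof (euler_seq_pos n). nra.
Qed.

Lemma euler_seq_damped_le n : (1 <= n)%nat ->
  euler_seq z (S n) * exp (z * (1 + z) / INR (S n)) <= euler_seq z n * exp (z * (1 + z) / INR n).
Proof.
  intros Hn. rewrite euler_seq_S by exact Hn.
  destruct (ln_succ_sub_bounds n Hn) as [_ Hup].
  assert (Hm : 1 <= INR n) by (apply (le_INR 1); exact Hn).
  set (d := ln (INR (S n)) - ln (INR n)) in *.
  rewrite S_INR in *. set (m := INR n) in *. set (w := z * (1 + z)).
  assert (Hw : 0 <= w / m) by (apply Rdiv_le_0_compat; unfold w; nra).
  assert (Hd : exp (z * d) <= exp (z / m))
    by (apply exp_le_mono; unfold Rdiv; apply Rmult_le_compat_l; lra).
  assert (Hfrac : (m + 1) / (z + (m + 1)) <= exp (- (z / (z + (m + 1))))).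
  { pose proof (exp_ineq1_le (- (z / (z + (m + 1))))).
    replace ((m + 1) / (z + (m + 1))) with (1 + - (z / (z + (m + 1)))) by (field; lra). lra. }
  (* z/m - z/(z+m+1) = w/(m (z+m+1)) is at most w/(m (m+1)) = w/m - w/(m+1). *)
  assert (Htel : z / m + - (z / (z + (m + 1))) + w / (m + 1) <= w / m).
  { assert (Hinv : / (z + (m + 1)) <= / (m + 1)) by (apply Rinv_le_contravar; lra).
    assert (Hid : z / m + - (z / (z + (m + 1))) + w / (m + 1) - w / m
                  = w / m * / (z + (m + 1)) - w / m * / (m + 1)) by (unfold w; field; lra).
    pose proof (Rmult_le_compat_l _ _ _ Hw Hinv). lra. }
  pose proof (euler_seq_pos n) as Ha.
  rewrite Rmult_assoc. apply Rmult_le_compat_l; [lra|].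
  apply Rle_trans with (exp (z / m) * exp (- (z / (z + (m + 1)))) * exp (w / (m + 1))).
  - replace ((m + 1) * exp (z * d) / (z + (m + 1)))
      with (exp (z * d) * ((m + 1) / (z + (m + 1)))) by (field; lra).
    apply Rmult_le_compat_r; [apply Rlt_le, exp_pos|].
    apply Rmult_le_compat; [apply Rlt_le, exp_pos | apply Rdiv_le_0_compat; lra | exact Hd |].
    exact Hfrac.
  - rewrite <- !exp_plus. apply exp_le_mono, Htel.
Qed.

Lemma euler_seq_le_bound n : (1 <= n)%nat -> euler_seq z n <= euler_seq z 1 * exp (z * (1 + z)).
Proof.
  intros Hn.
  assert (Hdamp_ge : euler_seq z n <= euler_seq z n * exp (z * (1 + z) / INR n)).
  { pose proof (euler_seq_pos n).
    assert (0 <= z * (1 + z) / INR n) by (apply Rdiv_le_0_compat; [nra | apply lt_0_INR; lia]).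
    pose proof (exp_ineq1_le (z * (1 + z) / INR n)). nra. }
  apply Rle_trans with (1 := Hdamp_ge). clear Hdamp_ge.
  induction n as [|[|n] IH]; [lia| |].
  - simpl INR. rewrite Rdiv_1_r. lra.
  - eapply Rle_trans; [apply euler_seq_damped_le; lia | apply IH; lia].
Qed.

Lemma is_lim_seq_euler : is_lim_seq (euler_seq z) (Gamma_R z).
Proof.
  assert (Hex : ex_finite_lim_seq (fun n => euler_seq z (S n))).
  { apply ex_finite_lim_seq_incr with (M := euler_seq z 1 * exp (z * (1 + z))).
    - intros n. apply euler_seq_le_S. lia.
    - intros n. apply euler_seq_le_bound. lia. }
  destruct Hex as [l Hl]. apply is_lim_seq_incr_1 in Hl.
  unfold Gamma_R. rewrite (is_lim_seq_unique _ _ Hl). exact Hl.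
Qed.

Lemma Gamma_R_pos : 0 < Gamma_R z.
Proof.
  assert (Hge : forall n, euler_seq z 1 <= euler_seq z (S n)).
  { induction n as [|n IH]; [lra|].
    apply Rle_trans with (1 := IH), euler_seq_le_S. lia. }
  pose proof (is_lim_seq_le _ _ _ _ Hge (is_lim_seq_const _)
                (proj1 (is_lim_seq_incr_1 _ _) is_lim_seq_euler)) as Hle.
  simpl in Hle. pose proof (euler_seq_pos 1). lra.
Qed.

End EulerLimit.

Lemma euler_seq_succ_arg z n : 0 < z -> (1 <= n)%nat ->
  euler_seq (z + 1) n = euler_seq z n * (z * INR n / (z + 1 + INR n)).
Proof.
  intros Hz Hn. assert (Hm : 1 <= INR n) by (apply (le_INR 1); exact Hn).
  unfold euler_seq. rewrite Rmult_plus_distr_r, exp_plus, Rmult_1_l, exp_ln by lra.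
  assert (Hp : pochhammer (z + 1) (S n) = pochhammer z (S n) * (z + 1 + INR n) / z).
  { apply Rmult_eq_reg_r with z; [|lra].
    rewrite pochhammer_succ_arg, S_INR. field. lra. }
  rewrite Hp. pose proof (pochhammer_pos z (S n) Hz). field. repeat split; lra.
Qed.

Lemma is_lim_seq_ratio a : 0 <= a -> is_lim_seq (fun n => a * INR n / (a + 1 + INR n)) a.
Proof.
  intros Ha.
  apply is_lim_seq_ext_loc with (u := fun n => a * / (1 + (a + 1) * / INR n)).
  { exists 1%nat. intros n Hn. assert (1 <= INR n) by (apply (le_INR 1); exact Hn).
    field. split; lra. }
  assert (Hinv : is_lim_seq (fun n => / INR n) 0)
    by (apply (is_lim_seq_inv _ _ is_lim_seq_INR); discriminate).
  pose proof (is_lim_seq_plus' _ _ _ _ (is_lim_seq_const 1)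
                (is_lim_seq_mult' _ _ _ _ (is_lim_seq_const (a + 1)) Hinv)) as Hden.
  rewrite Rmult_0_r, Rplus_0_r in Hden.
  pose proof (is_lim_seq_inv _ _ Hden) as Hinv_den. simpl in Hinv_den.
  rewrite Rinv_1 in Hinv_den.
  pose proof (is_lim_seq_mult' _ _ _ _ (is_lim_seq_const a) (Hinv_den ltac:(injection; lra))) as H.
  rewrite Rmult_1_r in H. exact H.
Qed.

Lemma Gamma_R_succ z : 0 < z -> Gamma_R (z + 1) = z * Gamma_R z.
Proof.
  intros Hz.
  assert (Hlim : is_lim_seq (euler_seq (z + 1)) (Gamma_R z * z)).
  { apply is_lim_seq_ext_loc with (u := fun n => euler_seq z n * (z * INR n / (z + 1 + INR n))).
    - exists 1%nat. intros n Hn. symmetry. apply euler_seq_succ_arg; assumption.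
    - apply is_lim_seq_mult'; [apply is_lim_seq_euler, Hz | apply is_lim_seq_ratio; lra]. }
  unfold Gamma_R at 1. rewrite (is_lim_seq_unique _ _ Hlim). simpl. ring.
Qed.

Lemma Gamma_R_add_nat r m : 0 < r -> Gamma_R (r + INR m) = pochhammer r m * Gamma_R r.
Proof.
  intros Hr. induction m as [|m IH]; simpl pochhammer.
  - simpl. rewrite Rplus_0_r. ring.
  - pose proof (pos_INR m).
    rewrite S_INR, <- Rplus_assoc, Gamma_R_succ, IH by lra. ring.
Qed.

Lemma Gamma_RtoC_add_nat r m : 0 < r ->
  Gamma (RtoC (r + INR m)) = (RtoC (pochhammer r m) * Gamma (RtoC r))%C.
Proof.
  intros Hr. pose proof (pos_INR m).
  rewrite !Gamma_RtoC, Gamma_R_add_nat, RtoC_mult by lra. reflexivity.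
Qed.

Lemma Gamma_RtoC_neq0 r : 0 < r -> Gamma (RtoC r) <> RtoC 0.
Proof.
  intros Hr. rewrite Gamma_RtoC by exact Hr. intros E. injection E.
  pose proof (Gamma_R_pos r Hr). lra.
Qed.

Lemma sum_n_C (a : nat -> C) n :
  sum_n (G := C_AbelianMonoid) a n = (sum_n (fun k => Re (a k)) n, sum_n (fun k => Im (a k)) n).
Proof.
  induction n as [|n IH].
  - rewrite !sum_O. destruct (a 0%nat). reflexivity.
  - rewrite !sum_Sn, IH. destruct (a (S n)). reflexivity.
Qed.

Lemma is_series_C_Re_Im (a : nat -> C) (l : C) :
  is_series (V := C_NormedModule) a l ->
  is_series (fun n => Re (a n)) (Re l) /\ is_series (fun n => Im (a n)) (Im l).
Proof.
  unfold is_series. intros H. split; intros P [eps HP].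
  - destruct (H (fun y : C => P (Re y))) as [N HN].
    { exists eps. intros y [Hy _]. apply HP, Hy. }
    exists N. intros n Hn. specialize (HN n Hn). rewrite sum_n_C in HN. exact HN.
  - destruct (H (fun y : C => P (Im y))) as [N HN].
    { exists eps. intros y [_ Hy]. apply HP, Hy. }
    exists N. intros n Hn. specialize (HN n Hn). rewrite sum_n_C in HN. exact HN.
Qed.

Lemma is_series_FoxWright ps qs z :
  FW_converges ps qs z -> is_series (V := C_NormedModule) (FW_term ps qs z) (FoxWright ps qs z).
Proof.
  intros [l Hl]. destruct (is_series_C_Re_Im _ _ Hl) as [HRe HIm].
  unfold FoxWright. rewrite (is_series_unique _ _ HRe), (is_series_unique _ _ HIm).
  destruct l. exact Hl.
Qed.

(* The equation is stated at type [C] rather than [C_NormedModule], so that [ring] applies. *)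
Lemma is_series_C_ext (a b : nat -> C) (l : C) :
  (forall n, a n = b n) ->
  is_series (V := C_NormedModule) a l -> is_series (V := C_NormedModule) b l.
Proof. apply is_series_ext. Qed.

Lemma is_series_zero {K : AbsRing} {V : NormedModule K} :
  is_series (fun _ : nat => @zero V) zero.
Proof.
  unfold is_series. apply filterlim_ext with (f := fun _ => zero); [|apply filterlim_const].
  intros n. induction n as [|n IH]; [rewrite sum_O; reflexivity|].
  rewrite sum_Sn, <- IH, plus_zero_r. reflexivity.
Qed.

Lemma is_series_Csum {I : Type} (ks : list I) (a : I -> nat -> C) (l : I -> C) :
  (forall k, In k ks -> is_series (V := C_NormedModule) (a k) (l k)) ->
  is_series (V := C_NormedModule)
    (fun n => fold_right Cplus (RtoC 0) (map (fun k => a k n) ks))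
    (fold_right Cplus (RtoC 0) (map l ks)).
Proof.
  induction ks as [|k ks IH]; intros Hks; simpl.
  - apply (is_series_zero (V := C_NormedModule)).
  - apply (is_series_plus (V := C_NormedModule)); [apply Hks; left; reflexivity|].
    apply IH. intros k' Hk'. apply Hks. right. exact Hk'.
Qed.

Lemma sum_n_zero_between {G : AbelianMonoid} (u : nat -> G) a b :
  (a <= b)%nat -> (forall i, (a < i <= b)%nat -> u i = zero) -> sum_n u b = sum_n u a.
Proof.
  intros Hab Hzero. induction b as [|b IH].
  - replace a with 0%nat by lia. reflexivity.
  - destruct (Nat.eq_dec a (S b)) as [->|Hne]; [reflexivity|].
    rewrite sum_Sn, Hzero, plus_zero_r by lia.
    apply IH; [lia|]. intros i Hi. apply Hzero. lia.
Qed.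

Lemma is_series_arith_subseq {K : AbsRing} {V : NormedModule K} (u : nat -> V) (l : V) d r :
  (0 < d)%nat -> (forall n, (forall m, n <> d * m + r)%nat -> u n = zero) ->
  is_series u l -> is_series (fun m => u (d * m + r)%nat) l.
Proof.
  intros Hd Hzero Hu.
  assert (Hpartial : forall m, sum_n (fun m => u (d * m + r)%nat) m = sum_n u (d * m + r)).
  { induction m as [|m IH].
    - rewrite sum_O, Nat.mul_0_r, Nat.add_0_l.
      destruct r as [|r]; [rewrite sum_O; reflexivity|].
      rewrite sum_Sn, (sum_n_zero_between u 0 r), sum_O, (Hzero 0%nat), plus_zero_l;
        [reflexivity | intros m E; lia | lia | intros i Hi; apply Hzero; intros m E; nia].
    - rewrite sum_Sn, IH.
      replace (d * S m + r)%nat with (S (d * m + r + (d - 1))) by nia.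
      rewrite sum_Sn. f_equal. symmetry.
      apply sum_n_zero_between; [lia|].
      intros i Hi. apply Hzero. intros m' ->.
      assert (m < m')%nat by (apply (Nat.mul_lt_mono_pos_l d); lia). nia. }
  unfold is_series in *. intros P HP. destruct (Hu P HP) as [N HN].
  exists N. intros m Hm. rewrite Hpartial. apply HN. nia.
Qed.

Lemma alpha5_pow j : (alpha5 ^ j)%C = (cos (INR j * (2 * PI / 5)), sin (INR j * (2 * PI / 5))).
Proof.
  induction j as [|j IH].
  - simpl. rewrite Rmult_0_l, cos_0, sin_0. reflexivity.
  - rewrite Cpow_S, IH. unfold alpha5, Cexp. simpl Re; simpl Im. rewrite exp_0, !Rmult_1_l.
    rewrite S_INR, Rmult_plus_distr_r, Rmult_1_l, cos_plus, sin_plus.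
    unfold Cmult. simpl. f_equal; ring.
Qed.

Lemma alpha5_pow_5 : (alpha5 ^ 5)%C = RtoC 1.
Proof.
  rewrite alpha5_pow. replace (INR 5 * (2 * PI / 5)) with (2 * PI) by (simpl; field).
  rewrite cos_2PI, sin_2PI. reflexivity.
Qed.

Lemma alpha5_pow_mod j : (alpha5 ^ j)%C = (alpha5 ^ (j mod 5))%C.
Proof.
  rewrite (Nat.div_mod_eq j 5) at 1.
  rewrite Cpow_add_r, Cpow_mult_r, alpha5_pow_5, Cpow_1_l. ring.
Qed.

Lemma alpha5_pow_neq1 j : (1 <= j <= 4)%nat -> (alpha5 ^ j)%C <> RtoC 1.
Proof.
  intros Hj E. rewrite alpha5_pow in E. injection E as _ Hsin.
  pose proof PI_RGT_0.
  assert (j = 1 \/ j = 2 \/ j = 3 \/ j = 4)%nat as [-> | [-> | [-> | ->]]] by lia;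
    simpl INR in Hsin.
  - pose proof (sin_gt_0 (1 * (2 * PI / 5))). lra.
  - pose proof (sin_gt_0 ((1 + 1) * (2 * PI / 5))). lra.
  - pose proof (sin_lt_0 ((1 + 1 + 1) * (2 * PI / 5))). lra.
  - pose proof (sin_lt_0 ((1 + 1 + 1 + 1) * (2 * PI / 5))). lra.
Qed.

Lemma sum_pow_root_of_unity5 (b : C) : (b ^ 5)%C = RtoC 1 -> b <> RtoC 1 ->
  fold_right Cplus (RtoC 0) (map (fun k => b ^ k)%C (seq 0 5)) = RtoC 0.
Proof.
  intros H5 H1. cbn [seq map fold_right].
  assert (Hb : (b - 1)%C <> RtoC 0) by (apply Cminus_eq_contra, H1).
  set (s := (b ^ 0 + (b ^ 1 + (b ^ 2 + (b ^ 3 + (b ^ 4 + 0)))))%C).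
  assert (Hs : ((b - 1) * s)%C = RtoC 0) by (rewrite <- (proj1 (Ceq_minus _ _) H5); unfold s; ring).
  replace s with (/ (b - 1) * ((b - 1) * s))%C by (field; exact Hb).
  rewrite Hs. ring.
Qed.

Definition alpha5_power_sum (j : nat) : C :=
  fold_right Cplus (RtoC 0) (map (fun k => (alpha5 ^ j) ^ k)%C (seq 0 5)).

Lemma alpha5_power_sum_nonmult j : (j mod 5 <> 0)%nat -> alpha5_power_sum j = RtoC 0.
Proof.
  intros Hj. apply sum_pow_root_of_unity5.
  - rewrite <- Cpow_mult_r, Nat.mul_comm, Cpow_mult_r, alpha5_pow_5, Cpow_1_l. reflexivity.
  - rewrite alpha5_pow_mod. apply alpha5_pow_neq1.
    pose proof (Nat.mod_upper_bound j 5). lia.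
Qed.

Lemma alpha5_power_sum_mult m : alpha5_power_sum (5 * m) = RtoC 5.
Proof.
  unfold alpha5_power_sum. rewrite Cpow_mult_r, alpha5_pow_5, Cpow_1_l. cbn [seq map fold_right].
  rewrite !Cpow_1_l. unfold RtoC, Cplus. simpl. f_equal; ring.
Qed.

Lemma mod5_double_succ_eq0 n : ((2 * n + 1) mod 5 = 0)%nat -> exists m, n = (5 * m + 2)%nat.
Proof.
  intros E. pose proof (Nat.div_mod_eq (2 * n + 1) 5) as Hdiv. rewrite E in Hdiv.
  destruct (Nat.Even_or_Odd ((2 * n + 1) / 5)) as [[m Hm]|[m Hm]]; [lia | exists m; lia].
Qed.

Lemma FW_term_rotate ps qs (c x w : C) k n :
  (w ^ k * FW_term ps qs (c * (x * w ^ k) ^ 2) n)%C =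
  (FW_term ps qs (c * x ^ 2) n * (w ^ (2 * n + 1)) ^ k)%C.
Proof.
  unfold FW_term.
  replace (c * (x * w ^ k) ^ 2)%C with (c * x ^ 2 * (w ^ k) ^ 2)%C by ring.
  rewrite Cpow_mult_l, <- !Cpow_mult_r.
  replace ((2 * n + 1) * k)%nat with (k * (2 * n) + k)%nat by lia.
  rewrite Cpow_add_r. unfold Cdiv. ring.
Qed.

Lemma is_series_FoxWright_rotations ps qs (c x : C) :
  (forall k : nat, (k < 5)%nat -> FW_converges ps qs (c * (x * alpha5 ^ k) ^ 2)%C) ->
  is_series (V := C_NormedModule)
    (fun n => FW_term ps qs (c * x ^ 2) n * alpha5_power_sum (2 * n + 1))%C
    (fold_right Cplus (RtoC 0)
       (map (fun k => alpha5 ^ k * FoxWright ps qs (c * (x * alpha5 ^ k) ^ 2))%C (seq 0 5))).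
Proof.
  intros Hconv.
  eapply is_series_C_ext; [|apply (is_series_Csum (seq 0 5)
      (fun k n => alpha5 ^ k * FW_term ps qs (c * (x * alpha5 ^ k) ^ 2) n)%C)].
  - intros n. unfold alpha5_power_sum. cbn [seq map fold_right].
    rewrite !FW_term_rotate. ring.
  - intros k Hk. apply in_seq in Hk.
    apply (is_series_scal (V := C_NormedModule)), is_series_FoxWright, Hconv. lia.
Qed.

Lemma map_Gamma_shift25 (ps : list param) m :
  map (fun p => Gamma (fst p + RtoC (snd p * INR m))%C) (map shift25 ps) =
  map (fun p => Gamma (fst p + RtoC (snd p * INR (5 * m + 2)))%C) ps.
Proof.
  rewrite map_map. apply map_ext. intros [a A]. unfold shift25. simpl fst; simpl snd.
  rewrite <- Cplus_assoc, <- RtoC_plus, plus_INR, mult_INR. simpl INR.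
  do 3 f_equal. ring.
Qed.

(* Unconditional, because Rocq's [Cinv 0] is [0]. *)
Lemma Cinv_mult_distr (a b : C) : Cinv (a * b)%C = (Cinv a * Cinv b)%C.
Proof.
  assert (Cinv_0 : Cinv (RtoC 0) = RtoC 0)
    by (unfold Cinv, RtoC; simpl; f_equal; unfold Rdiv; ring).
  destruct (Ceq_dec a (RtoC 0)) as [->|Ha]; [rewrite Cmult_0_l, Cinv_0; ring|].
  destruct (Ceq_dec b (RtoC 0)) as [->|Hb]; [rewrite Cmult_0_r, Cinv_0; ring|].
  field. split; assumption.
Qed.

(* Group the factors 3 .. 5m+2 in fives:
   (5j+3)...(5j+7) = 5^5 (j+3/5)(j+4/5)(j+1)(j+6/5)(j+7/5). *)
Lemma fact_5m2 m : INR (fact (5 * m + 2)) =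
  2 * 5 ^ (5 * m) * INR (fact m)
    * pochhammer (3/5) m * pochhammer (4/5) m * pochhammer (6/5) m * pochhammer (7/5) m.
Proof.
  induction m as [|m IH]; [simpl; ring|].
  replace (5 * S m + 2)%nat with (S (S (S (S (S (5 * m + 2))))))%nat by lia.
  replace (5 * S m)%nat with (5 * m + 5)%nat by lia.
  cbn [fact pochhammer]. rewrite !mult_INR, IH, pow_add, !S_INR, plus_INR, mult_INR.
  simpl INR. simpl pow. field.
Qed.

Definition extra_bottom_params : list param :=
  [(RtoC (3/5), 1); (RtoC (4/5), 1); (RtoC (6/5), 1); (RtoC (7/5), 1)].

Lemma FW_term_5m2 ps qs (z : C) m :
  (RtoC 5 * FW_term ps qs z (5 * m + 2))%C =
  (RtoC 5 * z ^ 2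
     * Gamma (RtoC (3/5)) * Gamma (RtoC (4/5)) * Gamma (RtoC (6/5)) * Gamma (RtoC (7/5))
     / RtoC 2
   * FW_term (map shift25 ps) (extra_bottom_params ++ map shift25 qs) ((z / RtoC 5) ^ 5) m)%C.
Proof.
  unfold FW_term. rewrite map_app, prodC_app, !map_Gamma_shift25.
  set (P := prodC (map (fun p => Gamma (fst p + RtoC (snd p * INR (5 * m + 2)))%C) ps)).
  set (Q := prodC (map (fun p => Gamma (fst p + RtoC (snd p * INR (5 * m + 2)))%C) qs)).
  unfold extra_bottom_params, prodC. cbn [map fold_right fst snd].
  rewrite !Rmult_1_l, <- !RtoC_plus, !Gamma_RtoC_add_nat by lra.
  unfold Cdiv. rewrite Cinv_mult_distr. set (invQ := Cinv Q).
  assert (H5 : RtoC 5 <> RtoC 0) by (intros E; injection E; lra).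
  rewrite <- Cpow_mult_r, Cpow_mult_l, Cpow_inv, Cpow_add_r by exact H5.
  rewrite fact_5m2, !RtoC_mult, RtoC_pow.
  pose proof (Gamma_RtoC_neq0 (3/5) ltac:(lra)). pose proof (Gamma_RtoC_neq0 (4/5) ltac:(lra)).
  pose proof (Gamma_RtoC_neq0 (6/5) ltac:(lra)). pose proof (Gamma_RtoC_neq0 (7/5) ltac:(lra)).
  assert (Hpoch : forall r, 0 < r -> RtoC (pochhammer r m) <> RtoC 0)
    by (intros r Hr E; injection E; pose proof (pochhammer_pos r m Hr); lra).
  assert (Hfact : RtoC (INR (fact m)) <> RtoC 0)
    by (intros E; injection E; apply INR_fact_neq_0).
  pose proof (Cpow_nz _ (5 * m) H5).
  field. repeat split; try apply Hpoch; try lra; assumption.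
Qed.

Theorem theorem4 (ps qs : list param) (c x : C) :
  FW_params_ok ps qs ->
  FW_params_ok (map shift25 ps)
    ([(RtoC (3/5), 1); (RtoC (4/5), 1); (RtoC (6/5), 1); (RtoC (7/5), 1)] ++ map shift25 qs) ->
  (forall k : nat, (k < 5)%nat ->
     FW_converges ps qs (c * (x * alpha5 ^ k) ^ 2)%C) ->
  FW_converges (map shift25 ps)
    ([(RtoC (3/5), 1); (RtoC (4/5), 1); (RtoC (6/5), 1); (RtoC (7/5), 1)] ++ map shift25 qs)
    ((c * x ^ 2 / RtoC 5) ^ 5)%C ->
  fold_right Cplus (RtoC 0)
    (map (fun k => alpha5 ^ k * FoxWright ps qs (c * (x * alpha5 ^ k) ^ 2))%C (seq 0 5))
  = (RtoC 5 * c ^ 2 * x ^ 4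
       * Gamma (RtoC (3/5)) * Gamma (RtoC (4/5)) * Gamma (RtoC (6/5)) * Gamma (RtoC (7/5))
       / RtoC 2
     * FoxWright (map shift25 ps)
         ([(RtoC (3/5), 1); (RtoC (4/5), 1); (RtoC (6/5), 1); (RtoC (7/5), 1)] ++ map shift25 qs)
         ((c * x ^ 2 / RtoC 5) ^ 5))%C.
Proof.
  intros _ _ Hconv Hconv'.
  pose proof (is_series_FoxWright_rotations ps qs c x Hconv) as Hsum.
  apply (is_series_arith_subseq _ _ 5 2) in Hsum; [|lia|].
  2:{ intros n Hn. rewrite alpha5_power_sum_nonmult.
      - change (@eq C (FW_term ps qs (c * x ^ 2) n * RtoC 0)%C (RtoC 0)). ring.
      - intros E. destruct (mod5_double_succ_eq0 n E) as [m Hm]. exact (Hn m Hm). }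
  set (K := (RtoC 5 * c ^ 2 * x ^ 4
               * Gamma (RtoC (3/5)) * Gamma (RtoC (4/5)) * Gamma (RtoC (6/5)) * Gamma (RtoC (7/5))
               / RtoC 2)%C).
  apply (is_series_C_ext _
           (fun m => K * FW_term (map shift25 ps) (extra_bottom_params ++ map shift25 qs)
                           ((c * x ^ 2 / RtoC 5) ^ 5) m)%C) in Hsum.
  2:{ intros m. replace (2 * (5 * m + 2) + 1)%nat with (5 * (2 * m + 1))%nat by lia.
      rewrite alpha5_power_sum_mult, Cmult_comm, FW_term_5m2.
      replace (RtoC 5 * (c * x ^ 2) ^ 2)%C with (RtoC 5 * c ^ 2 * x ^ 4)%C by ring. reflexivity. }
  exact (filterlim_locally_unique _ _ _ Hsum
           (is_series_scal K _ _ (is_series_FoxWright _ _ _ Hconv'))).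
Qed.
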